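(* Let $T$ be a measure-preserving automorphism of a standard probability Borel space $(X,\mathcal{B},\mu)$, where $X$ is endowed with a metric $d$ generating the $\sigma$-algebra $\mathcal{B}$. Let $\{W_n\}_{n\in\mathbb{N}}$ be measurable subsets of $X$ and $\{q_n\}_{n\in\mathbb{N}}$ an increasing sequence of natural numbers. If $\sup_{x\in W_n}d(T^{q_n}x,x)\to 0$, then $\{q_n\}$ is a rigidity sequence for $T$ along $\{W_n\}$.
   Context: $\{q_n\}$ is a rigidity sequence for $T$ along $\{W_n\}$ if $\mu((T^{-q_n}A\,\triangle\, A)\cap W_n)\to 0$ for every $A\in\mathcal{B}$. *)

From HB Require Import structures.
From mathcomp Require Import all_boot all_order all_algebra.
From mathcomp Require Import all_classical all_reals all_analysis.
Set Implicit Arguments. Unset Strict Implicit. Unset Printing Implicit Defensive.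
Import Order.TTheory GRing.Theory Num.Theory.
Local Open Scope classical_set_scope.
Local Open Scope ring_scope.

Definition is_metric (R : realType) (X : Type) (d : X -> X -> R) : Prop :=
  [/\ forall x y, 0 <= d x y,
      forall x y, d x y = 0 <-> x = y,
      forall x y, d x y = d y x &
      forall x y z, d x z <= d x y + d y z].

Definition metric_open (R : realType) (X : Type) (d : X -> X -> R)
  (U : set X) : Prop :=
  forall x, U x -> exists2 r : R, 0 < r & [set y | d x y < r] `<=` U.

Definition metric_borel (R : realType) (X : Type) (d : X -> X -> R) : set (set X) :=
  <<s metric_open d >>.

Definition mp_automorphism (dsp : measure_display) (X : measurableType dsp)
  (R : realType) (mu : set X -> \bar R) (T : X -> X) : Prop :=
  [/\ bijective T,
      measurable_fun setT T,
      (forall A, measurable A -> measurable (T @` A)) &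
      forall A, measurable A -> mu (T @^-1` A) = mu A].

Definition rigidity_along (dsp : measure_display) (X : measurableType dsp)
  (R : realType) (mu : set X -> \bar R) (T : X -> X) (q : nat -> nat)
  (W : nat -> set X) : Prop :=
  forall A, measurable A ->
    (fun n => mu ((((iter (q n) T) @^-1` A) `+` A) `&` W n)) @ \oo --> 0%E.

From HB Require Import structures.
From mathcomp Require Import all_boot all_order all_algebra.
From mathcomp Require Import all_classical all_reals all_analysis.
From mathcomp Require Import lra.
Import Order.TTheory GRing.Theory Num.Theory.
Local Open Scope classical_set_scope.
Local Open Scope ring_scope.

(* The sets A with mu((T^-q_n A `+` A) `&` W_n) -> 0 form a sigma-algebra:
   complements are immediate, and a countable union differs from a finite
   subunion by a set C of small measure, whose contribution is at most
   mu(T^-q_n C) + mu(C) = 2 mu(C) by invariance.  It thus suffices to treat an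
   open set U.  If every point of W_n is moved by T^q_n less than r, a point of
   W_n crossing the boundary of U (or its image) lies in the layer of points of
   U at distance < r from the complement of U; these layers decrease to the
   empty set as r -> 0, so their measure tends to 0. *)

Section nonneg_ereal_cvg0.
Context {R : realType} {I : Type} {F : set_system I} {FF : Filter F}.
Local Open Scope ereal_scope.

Lemma nneseq_cvg0P (u : I -> \bar R) : (forall i, 0 <= u i) ->
  u @ F --> 0 <-> forall e : R, (0 < e)%R -> \forall i \near F, u i <= e%:E.
Proof.
move=> u_ge0; split.
  move=> /fine_cvgP[u_fin /cvgr0Pnorm_le u_small] e e0.
  apply: filterS2 u_fin (u_small e e0) => i /fineK <- /=.
  by rewrite lee_fin => /(le_trans (ler_norm _)).
move=> u_small.
have fin_le e i : u i <= e%:E -> u i \is a fin_num.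
  by move=> ui_le; rewrite ge0_fin_numE// (le_lt_trans ui_le) ?ltry.
apply/fine_cvgP; split; first exact: filterS (fin_le 1%R) (u_small 1%R ltr01).
apply/cvgr0Pnorm_le => e e0; apply: filterS (u_small e e0) => i ui_le /=.
by rewrite ger0_norm ?fine_ge0// -lee_fin fineK// (fin_le e).
Qed.

End nonneg_ereal_cvg0.

Section finite_measure_cvg0.
Context {R : realType} {dsp : measure_display} {X : measurableType dsp}.
Variable mu : {finite_measure set X -> \bar R}.

Lemma nonincreasing_bigcap0_cvg_mu (C : (set X)^nat) :
  (forall n, measurable (C n)) -> nonincreasing_seq C ->
  \bigcap_n C n = set0 -> (mu \o C) @ \oo --> 0%E.
Proof.
move=> mC C_dec C_cap; rewrite -(measure0 mu) -C_cap.
apply: nonincreasing_cvg_mu => //; first by rewrite ltey_eq fin_num_measure.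
by apply: bigcapT_measurable.
Qed.

End finite_measure_cvg0.

Section rigidity.
Context {R : realType} {dsp : measure_display} {X : measurableType dsp}.
Variables (mu : {finite_measure set X -> \bar R}) (T : X -> X).
Variables (q : nat -> nat) (W : nat -> set X).
Hypothesis mT : measurable_fun setT T.
Hypothesis muT : forall A, measurable A -> mu (T @^-1` A) = mu A.
Hypothesis mW : forall n, measurable (W n).
Local Open Scope ereal_scope.

Lemma measurable_preimage_iter k A :
  measurable A -> measurable (iter k T @^-1` A).
Proof.
elim: k A => [//|k IH] A mA; apply: (IH (T @^-1` A)).
by rewrite -[T @^-1` A]setTI; apply: mT.
Qed.

Lemma measure_preimage_iter k A :
  measurable A -> mu (iter k T @^-1` A) = mu A.
Proof.
move=> mA; elim: k => [//|k IH].
have -> : iter k.+1 T @^-1` A = T @^-1` (iter k T @^-1` A).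
  by apply/seteqP; split=> x; rewrite /preimage/= -iterSr.
by rewrite (muT _ (measurable_preimage_iter k _ mA)).
Qed.

Lemma measure_preimage_iterU_le k C : measurable C ->
  mu (iter k T @^-1` C `|` C) <= mu C + mu C.
Proof.
move=> mC; rewrite -{1}(measure_preimage_iter k _ mC).
by apply: measureU2 => //; apply: measurable_preimage_iter.
Qed.

Definition displaced n A := (iter (q n) T @^-1` A `+` A) `&` W n.

Lemma measurable_displaced n A : measurable A -> measurable (displaced n A).
Proof.
move=> mA; apply: measurableI => //; rewrite setY_def.
by apply: measurableU; apply: measurableD => //; apply: measurable_preimage_iter.
Qed.

Lemma displaced0 n : displaced n set0 = set0.
Proof. by rewrite /displaced preimage_set0 setY0 set0I. Qed.

Lemma displacedC n A : displaced n (~` A) = displaced n A.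
Proof.
rewrite /displaced -preimage_setC !setY_def !setDE !setCK.
by rewrite setUC [~` A `&` _]setIC [~` _ `&` A]setIC.
Qed.

Lemma displacedU n A B :
  displaced n (A `|` B) `<=` displaced n A `|` displaced n B.
Proof.
move=> x [[[[xA|xB] nxAB]|[[xA|xB] nxAB]] xW].
- by left; split=> //; left; split=> // ?; apply: nxAB; left.
- by right; split=> //; left; split=> // ?; apply: nxAB; right.
- by left; split=> //; right; split=> // ?; apply: nxAB; left.
- by right; split=> //; right; split=> // ?; apply: nxAB; right.
Qed.

Lemma displaced_sub n A : displaced n A `<=` iter (q n) T @^-1` A `|` A.
Proof. by move=> x [[[? _]|[? _]] _]; [left|right]. Qed.

Definition rigid_set A :=
  measurable A /\ (fun n => mu (displaced n A)) @ \oo --> 0.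

Lemma displaced_cvg0P A : (fun n => mu (displaced n A)) @ \oo --> 0 <->
  forall e : R, (0 < e)%R -> \forall n \near \oo, mu (displaced n A) <= e%:E.
Proof. by apply: nneseq_cvg0P => n; apply: measure_ge0. Qed.

Lemma rigid_set0 : rigid_set set0.
Proof.
split=> //; under eq_fun do rewrite displaced0 measure0.
exact: cvg_cst.
Qed.

Lemma rigid_setC A : rigid_set A -> rigid_set (~` A).
Proof.
move=> [mA A_rigid]; split; first exact: measurableC.
by under eq_fun do rewrite displacedC.
Qed.

Lemma rigid_setU A B : rigid_set A -> rigid_set B -> rigid_set (A `|` B).
Proof.
move=> [mA /displaced_cvg0P A_rigid] [mB /displaced_cvg0P B_rigid].
split; first exact: measurableU.
apply/displaced_cvg0P => e e0; have e2 : (0 < e / 2)%R by rewrite divr_gt0.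
apply: filterS2 (A_rigid _ e2) (B_rigid _ e2) => n muA muB.
rewrite [e]splitr EFinD; apply: le_trans (leeD muA muB).
apply: le_trans (measureU2 _ _ _); try exact: measurable_displaced.
apply: le_measure; rewrite ?inE; last exact: displacedU.
  by apply: measurable_displaced; apply: measurableU.
by apply: measurableU; apply: measurable_displaced.
Qed.

Lemma rigid_bigsetU (F : (set X)^nat) N : (forall i, rigid_set (F i)) ->
  rigid_set (\bigcup_(i < N) F i).
Proof.
move=> F_rigid; rewrite bigcup_mkord.
by apply: (big_ind rigid_set) => //; [exact: rigid_set0|exact: rigid_setU].
Qed.

Lemma rigid_set_approx A : measurable A ->
  (forall e : R, (0 < e)%R -> exists B C, [/\ rigid_set B, measurable C,
     mu C <= e%:E & \forall n \near \oo,
     displaced n A `<=` displaced n B `|` (iter (q n) T @^-1` C `|` C)]) ->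
  rigid_set A.
Proof.
move=> mA approx; split=> //; apply/displaced_cvg0P => e e0.
have e3 : (0 < e / 3)%R by rewrite divr_gt0.
have [B [C [[mB /displaced_cvg0P B_rigid] mC muC A_sub]]] := approx _ e3.
have mTC n : measurable (iter (q n) T @^-1` C `|` C).
  by apply: measurableU => //; apply: measurable_preimage_iter.
apply: filterS2 (B_rigid _ e3) A_sub => n muB A_subn.
apply: (@le_trans _ _ (mu (displaced n B `|` (iter (q n) T @^-1` C `|` C)))).
  apply: le_measure; rewrite ?inE//; first exact: measurable_displaced.
  by apply: measurableU => //; apply: measurable_displaced.
apply: le_trans (measureU2 _ _ _) _ => //; first exact: measurable_displaced.
have -> : e = (e / 3 + (e / 3 + e / 3))%R by lra.
rewrite !EFinD; apply: leeD => //.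
by apply: le_trans (measure_preimage_iterU_le _ _ mC) _; apply: leeD.
Qed.

Lemma rigid_bigcup (F : (set X)^nat) : (forall i, rigid_set (F i)) ->
  rigid_set (\bigcup_i F i).
Proof.
move=> F_rigid; set A := \bigcup_i F i.
have mF i : measurable (F i) by have [] := F_rigid i.
have mA : measurable A by exact: bigcupT_measurable.
pose C N := A `\` \bigcup_(i < N) F i.
have mC N : measurable (C N).
  by apply: measurableD => //; have [] := rigid_bigsetU _ N F_rigid.
have C_dec : nonincreasing_seq C.
  move=> m n mn; apply/subsetPset => x [Ax nFx]; split=> // -[i /= im Fi].
  by apply: nFx; exists i => //=; apply: leq_trans mn.
have C_cap : \bigcap_N C N = set0.
  apply/seteqP; split=> x // Cx; have [[i _ Fi] _] := Cx 0%N I.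
  by have [_] := Cx i.+1 I; apply; exists i => /=.
have /nneseq_cvg0P C_small := nonincreasing_bigcap0_cvg_mu mu _ mC C_dec C_cap.
apply: rigid_set_approx => // e e0.
have [K muCK] := filter_ex (C_small (fun=> measure_ge0 _ _) e e0).
exists (\bigcup_(i < K) F i), (C K); split => //; first exact: rigid_bigsetU.
apply: nearW => n; rewrite -{1}(setDUK (_ : \bigcup_(i < K) F i `<=` A)).
  by move=> x /displacedU [|/displaced_sub]; [left|right].
by move=> x [i _ Fi]; exists i.
Qed.

Section metric.
Variable d : X -> X -> R.
Hypothesis dC : forall x y, d x y = d y x.
Hypothesis d_triangle : forall x y z, (d x z <= d x y + d y z)%R.
Hypothesis open_measurable : forall U, metric_open d U -> measurable U.
Hypothesis displacement_cvg0 : forall e : R, (0 < e)%R ->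
  \forall n \near \oo, forall x, W n x -> (d (iter (q n) T x) x <= e)%R.

Definition compl_nbhd (U : set X) (r : R) :=
  [set x | exists2 y, ~ U y & (d x y < r)%R].

Lemma metric_open_compl_nbhd U r : metric_open d (compl_nbhd U r).
Proof.
move=> x [y nUy dxy]; exists (r - d x y)%R; first by rewrite subr_gt0.
move=> z /= dxz; exists y => //; have := d_triangle z x y; rewrite (dC z x); lra.
Qed.

Lemma bigcap_compl_nbhd_open U : metric_open d U ->
  \bigcap_k (U `&` compl_nbhd U k.+1%:R^-1) = set0.
Proof.
move=> U_open; apply/seteqP; split=> x // Vx; have [Ux _] := Vx 0%N I.
have [r r0 ball_sub] := U_open x Ux.
have [k _ /(_ k (leqnn k)) kr] := near_infty_natSinv_lt (PosNum r0).
have [_ [y nUy dxy]] := Vx k I.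
by apply: nUy; apply: ball_sub; apply: lt_trans dxy kr.
Qed.

Lemma displaced_sub_compl_nbhd n U r :
  (forall x, W n x -> d (iter (q n) T x) x < r)%R ->
  displaced n U `<=`
    iter (q n) T @^-1` (U `&` compl_nbhd U r) `|` (U `&` compl_nbhd U r).
Proof.
move=> small x [[[TxU nUx]|[Ux nTxU]] Wx].
  by left; split=> //; exists x => //; apply: small.
by right; split=> //; exists (iter (q n) T x) => //; rewrite dC; apply: small.
Qed.

Lemma rigid_metric_open U : metric_open d U -> rigid_set U.
Proof.
move=> U_open; apply: rigid_set_approx => [|e e0]; first exact: open_measurable.
pose V k := U `&` compl_nbhd U k.+1%:R^-1.
have mV k : measurable (V k).
  by apply: measurableI; apply: open_measurable => //; apply: metric_open_compl_nbhd.
have V_dec : nonincreasing_seq V.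
  move=> m n mn; apply/subsetPset => x [Ux [y nUy dxy]]; split=> //.
  by exists y => //; apply: lt_le_trans dxy _; rewrite lef_pV2 ?posrE// ler_nat.
have /nneseq_cvg0P V_small := nonincreasing_bigcap0_cvg_mu mu _ mV V_dec
  (bigcap_compl_nbhd_open _ U_open).
have [K muVK] := filter_ex (V_small (fun=> measure_ge0 _ _) e e0).
exists set0, (V K); split => //; first exact: rigid_set0.
have r0 : (0 < K.+1%:R^-1 / 2 :> R)%R by rewrite divr_gt0 ?invr_gt0.
apply: filterS (displacement_cvg0 _ r0) => n small; rewrite displaced0 set0U.
apply: displaced_sub_compl_nbhd => x /small /le_lt_trans; apply.
by rewrite ltr_pdivrMr// ltr_pMr ?invr_gt0// ltr1n.
Qed.

Lemma rigid_metric_borel A : metric_borel d A -> rigid_set A.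
Proof.
apply: smallest_sub; last by move=> U; apply: rigid_metric_open.
split; [exact: rigid_set0 | | exact: rigid_bigcup].
by move=> B; rewrite setTD; apply: rigid_setC.
Qed.

End metric.
End rigidity.

Theorem lemma3p3 (R : realType) (dsp : measure_display) (X : measurableType dsp)
  (mu : probability X R) (d : X -> X -> R) (T : X -> X)
  (W : nat -> set X) (q : nat -> nat) :
  is_metric d ->
  (forall A : set X, measurable A <-> metric_borel d A) ->
  mp_automorphism mu T ->
  (forall n, measurable (W n)) ->
  {homo q : m n / (m < n)%N >-> (m < n)%N} ->
  (forall e : R, 0 < e -> \forall n \near \oo,
      forall x, W n x -> d (iter (q n) T x) x <= e) ->
  rigidity_along mu T q W.
Proof.
move=> [_ _ dC d_triangle] measurableE [_ mT _ muT] mW _ displacement_cvg0 A mA.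
have open_measurable U : metric_open d U -> measurable U.
  by move=> U_open; apply/measurableE; apply: sub_gen_smallest.
have /measurableE A_borel := mA.
by have [] := rigid_metric_borel mu T q W mT muT mW d dC d_triangle
  open_measurable displacement_cvg0 A A_borel.
Qed.
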